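(* In the setting described in the context, let $p$ be a facet of $\Delta_\lambda$ of $\mathbf a$-degree at least $1$, with its nodes labelled $1,\dots,k-1$ so that $p$ is identified with the simplex on $[k-1]$. If $[k-1]\setminus L$ is a facet of $F_{<p}\cap p$, where $L$ is a set of consecutive indices, then $|L|\le 2$.
   Context: Let $n,d\ge2$, $V(n,d)=\{\mathbf b\in\mathbb N^n:\sum_i b_i=d\}$, and let $\mathbf a\in V(n,d)$ satisfy $a_1\le\dots\le a_n$ and $\mathbf a\notin\{(0,\dots,0,d),(0,\dots,0,1,d-1),(0,\dots,0,2,d-2)\}$. Let $\Gamma=V(n,d)\setminus\{\mathbf a\}$ and assume $\Gamma+\Gamma=V(n,2d)$. Order $V(n,d)$ lexicographically ($b<c$ iff the first nonzero coordinate of $c-b$ is positive). Let $\lambda$ be in the semigroup generated by $\Gamma$, $k=|\lambda|=(\sum_i\lambda_i)/d$. A closed chain from $0$ to $\lambda$ is a sequence $0=v_0,v_1,\dots,v_k=\lambda$ in $\mathbb N^n$ with all links $v_j-v_{j-1}\in V(n,d)$; its $\mathbf a$-degree is the number of links equal to $\mathbf a$; its open chain is $\{v_1,\dots,v_{k-1}\}$, with $v_j$ labelled $j$. $\Delta_\lambda$ is the simplicial complex whose facets are all these open chains. Facets are ordered: $q<p$ iff $\mathbf a$-degree of $q$ is smaller than that of $p$, or equal and the link sequence of $q$ is lexicographically smaller than that of $p$ (first links compared first, using the order on $V(n,d)$). $F_{<p}$ is the subcomplex of $\Delta_\lambda$ generated by the facets $q<p$; $p$ also denotes the full simplex on its nodes.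 *)

From mathcomp Require Import all_boot.
Set Implicit Arguments. Unset Strict Implicit. Unset Printing Implicit Defensive.

Definition pt (n : nat) := {ffun 'I_n -> nat}.

Definition zpt n : pt n := [ffun _ => 0].
Definition addpt n (b c : pt n) : pt n := [ffun i => b i + c i].
Definition sumpts n (s : seq (pt n)) : pt n := foldr (@addpt n) (zpt n) s.

Definition ptsum n (b : pt n) : nat := \sum_(i < n) b i.
Definition inV n (d : nat) (b : pt n) : bool := ptsum b == d.

Definition inGamma n d (a b : pt n) : bool := inV d b && (b != a).

Definition ltlex n (b c : pt n) : bool :=
  [exists i : 'I_n, [forall j : 'I_n, (j < i) ==> (b j == c j)] && (b i < c i)].

Definition tail2 n (x y : nat) : pt n :=
  [ffun i : 'I_n => if val i == n.-1 then y else if val i == n.-2 then x else 0].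

Definition sorted_pt n (a : pt n) : Prop := forall i j : 'I_n, i <= j -> a i <= a j.

Definition GammaGamma n d (a : pt n) : Prop :=
  forall c : pt n, inV (2 * d) c <->
    exists b1 b2, inGamma d a b1 /\ inGamma d a b2 /\ c = addpt b1 b2.

Definition in_semigroup n d (a lam : pt n) : Prop :=
  exists s : seq (pt n), all (inGamma d a) s /\ lam = sumpts s.

(* A closed chain from 0 to lam, given by its sequence of links. *)
Definition is_chain n d (lam : pt n) (s : seq (pt n)) : Prop :=
  all (inV d) s /\ sumpts s = lam.

Definition node n (s : seq (pt n)) (j : nat) : pt n := sumpts (take j s).

Definition in_open n (s : seq (pt n)) (v : pt n) : bool :=
  has (fun j => node s j == v) (iota 1 (size s).-1).

Definition adeg n (a : pt n) (s : seq (pt n)) : nat := count (pred1 a) s.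

Definition lexseq n (q p : seq (pt n)) : Prop :=
  exists i, i < size p /\ take i q = take i p /\
            ltlex (nth (zpt n) q i) (nth (zpt n) p i).

Definition facet_lt n (a : pt n) (q p : seq (pt n)) : Prop :=
  adeg a q < adeg a p \/ (adeg a q = adeg a p /\ lexseq q p).

(* T (a set of labels in [k-1]) is a face of F_{<p} ∩ p, where the node
   v_j of p carries label j. *)
Definition face_Fp n d (a lam : pt n) (p : seq (pt n)) (T : pred nat) : Prop :=
  (forall x, T x -> 0 < x < size p) /\
  exists q, is_chain d lam q /\ facet_lt a q p /\
            forall x, T x -> in_open q (node p x).

Definition facet_Fp n d (a lam : pt n) (p : seq (pt n)) (T : pred nat) : Prop :=
  face_Fp d a lam p T /\
  forall T', face_Fp d a lam p T' -> (forall x, T x -> T' x) -> (forall x, T' x -> T x).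

(* Suppose the hole L = [i, i+m) had m >= 3. The facet [k-1] \ L of F_{<p} ∩ p is witnessed
   by a chain q < p through every node of p outside L; as a node of a chain is determined by
   its weight, q agrees with p outside the m+1 links A of p spanning L. It suffices to replace
   A by a smaller window C with the same endpoints that meets A at an interior node: splicing C
   into p gives a chain below p covering a strictly larger face.
   If A contains the link a, keep the last link of A when A starts with a and the first one
   otherwise, and write the other links as elements of Gamma (possible as Gamma + Gamma =
   V(n,2d)); this lowers the a-degree. Otherwise the first link of q in A is lexicographically
   below A_0 (else q already passes through the node after A_0), and an exchange argument with
   unit moves, where sortedness of a and the three excluded shapes of a enter, yields y in
   Gamma with y < A_0 and y <= A_0 + ... + A_(m-1), or y < A_1 and y <= A_1 + A_m; completing
   y by elements of Gamma gives C. *)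

From mathcomp Require Import all_boot zify.
From Stdlib Require Import Classical.
Set Implicit Arguments. Unset Strict Implicit. Unset Printing Implicit Defensive.

Section Points.
Variable n : nat.
Implicit Types (s : seq (pt n)) (b c x : pt n).

Definition subpt b c : pt n := [ffun t => b t - c t].

Definition unitpt (j : 'I_n) : pt n := [ffun t => (t == j) : nat].

Definition move_unit b (c c' : 'I_n) : pt n := [ffun t => b t - (t == c) + (t == c')].

Lemma pt_eq b c : (forall t : 'I_n, b t = c t) -> b = c.
Proof. by move=> Hbc; apply/ffunP. Qed.

Lemma addptE b c t : addpt b c t = b t + c t. Proof. by rewrite ffunE. Qed.
Lemma zptE t : zpt n t = 0. Proof. by rewrite ffunE. Qed.
Lemma subptE b c t : subpt b c t = b t - c t. Proof. by rewrite ffunE. Qed.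

Lemma sumpts_cons x s t : sumpts (x :: s) t = x t + sumpts s t.
Proof. exact: addptE. Qed.

Lemma sumpts0 t : sumpts (nil : seq (pt n)) t = 0.
Proof. exact: zptE. Qed.

Lemma sumpts1 x t : sumpts [:: x] t = x t.
Proof. by rewrite sumpts_cons sumpts0 addn0. Qed.

Lemma sumpts_cat s1 s2 t : sumpts (s1 ++ s2) t = sumpts s1 t + sumpts s2 t.
Proof. by elim: s1 => [|x s1 IH] /=; rewrite ?zptE // !addptE IH addnA. Qed.

Lemma mem_sumpts_le x s t : x \in s -> x t <= sumpts s t.
Proof.
elim: s => [|y s IH] //; rewrite in_cons sumpts_cons => /predU1P [-> | /IH]; lia.
Qed.

Lemma ptsum_add b c : ptsum (addpt b c) = ptsum b + ptsum c.
Proof. by rewrite /ptsum -big_split; apply: eq_bigr => t _; rewrite addptE. Qed.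

Lemma ptsum_zpt : ptsum (zpt n) = 0.
Proof. by rewrite /ptsum big1 // => t _; rewrite zptE. Qed.

Lemma ptsum_sumpts d s : all (inV d) s -> ptsum (sumpts s) = size s * d.
Proof.
elim: s => [|x s IH] /=; first by rewrite ptsum_zpt.
by move=> /andP [/eqP Hx /IH Hs]; rewrite ptsum_add Hx Hs mulSn.
Qed.

Lemma ptsum_sub b c : (forall t, c t <= b t) -> ptsum (subpt b c) = ptsum b - ptsum c.
Proof.
move=> Hcb; have -> : ptsum b = ptsum (addpt c (subpt b c)).
  by congr ptsum; apply: pt_eq => t; rewrite addptE subptE subnKC.
by rewrite ptsum_add addKn.
Qed.

Lemma move_unit_src b (c c' : 'I_n) : c != c' -> move_unit b c c' c = b c - 1.
Proof. by move=> Hcc'; rewrite ffunE eqxx (negbTE Hcc') addn0. Qed.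

Lemma move_unit_dst b (c c' : 'I_n) : c != c' -> move_unit b c c' c' = b c' + 1.
Proof. by move=> Hcc'; rewrite ffunE eqxx eq_sym (negbTE Hcc') subn0. Qed.

Lemma move_unit_other b (c c' t : 'I_n) : t != c -> t != c' -> move_unit b c c' t = b t.
Proof. by move=> Htc Htc'; rewrite ffunE (negbTE Htc) (negbTE Htc') subn0 addn0. Qed.

Lemma ptsum_unitpt (j : 'I_n) : ptsum (unitpt j) = 1.
Proof.
rewrite /ptsum (bigD1 j) //= big1 => [|t Ht]; rewrite ffunE ?eqxx //.
by rewrite (negbTE Ht).
Qed.

Lemma ptsum_move_unit b (c c' : 'I_n) : 0 < b c -> ptsum (move_unit b c c') = ptsum b.
Proof.
move=> Hc; have E : addpt (move_unit b c c') (unitpt c) = addpt b (unitpt c').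
  by apply: pt_eq => t; rewrite !addptE !ffunE; case: (eqVneq t c) => [->|_] /=; lia.
apply/(@addIn 1); rewrite -[in LHS](ptsum_unitpt c) -ptsum_add E ptsum_add.
by rewrite ptsum_unitpt.
Qed.

Lemma move_unit_le b (c c' : 'I_n) X :
  c != c' -> (forall t, t != c' -> b t <= X t) -> b c' < X c' ->
  forall t, move_unit b c c' t <= X t.
Proof.
move=> Hcc' Hb Hc' t; case: (eqVneq t c') => [-> | Htc']; first by rewrite move_unit_dst // addn1.
have := Hb t Htc'; rewrite ffunE (negbTE Htc') addn0; lia.
Qed.

Lemma ltlex_of_prefix b c (r : 'I_n) :
  (forall t : 'I_n, t <= r -> b t <= c t) -> b r < c r -> ltlex b c.
Proof.
move=> Hle Hlt; have Hr : b r != c r by rewrite neq_ltn Hlt.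
case: (@arg_minnP _ r (fun t => b t != c t) val Hr) => t0 Ht0 Hmin.
apply/existsP; exists t0; apply/andP; split; last by rewrite ltn_neqAle Ht0 Hle ?Hmin.
apply/forallP => j; apply/implyP => Hj; apply: contraTT Hj => Hne.
by rewrite -leqNgt Hmin.
Qed.

Lemma ltlex_move_unit b (P : pt n) (c c' : 'I_n) :
  c < c' -> 0 < b c -> (forall t : 'I_n, t < c -> b t = P t) -> b c <= P c ->
  ltlex (move_unit b c c') P.
Proof.
move=> Hcc' Hc Hpre HcP; have Hne : c != c' by rewrite neq_ltn Hcc'.
apply: (ltlex_of_prefix (r := c)); last by rewrite move_unit_src //; lia.
move=> t; rewrite leq_eqVlt => /predU1P [/val_inj -> | Ht].
  by rewrite move_unit_src //; lia.
rewrite move_unit_other ?Hpre // neq_ltn ?Ht //.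
by rewrite (ltn_trans Ht Hcc').
Qed.

Lemma ltlex_irr b : ~~ ltlex b b.
Proof. by apply/existsP => [[t /andP [_]]]; rewrite ltnn. Qed.

End Points.

Lemma adeg_cat n (a : pt n) (s1 s2 : seq (pt n)) : adeg a (s1 ++ s2) = adeg a s1 + adeg a s2.
Proof. exact: count_cat. Qed.

Lemma adeg0_neq n (a x : pt n) s : adeg a s = 0 -> x \in s -> x != a.
Proof. by move=> /count_memPn Ha Hx; apply: contraNneq Ha => <-. Qed.

Lemma adeg_gamma n d (a : pt n) s : all (inGamma d a) s -> adeg a s = 0.
Proof.
move=> Hs; apply/count_memPn/negP => /(allP Hs).
by rewrite /inGamma eqxx andbF.
Qed.

Lemma gamma_inV n d (a : pt n) s : all (inGamma d a) s -> all (inV d) s.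
Proof. by apply: sub_all => x /andP []. Qed.

(** * The exchange lemma *)

Lemma ord_lt_neq n (t s : 'I_n) : t < s -> t != s.
Proof. by move=> H; rewrite neq_ltn H. Qed.

Lemma ord_gt_neq n (t s : 'I_n) : s < t -> t != s.
Proof. by move=> H; rewrite neq_ltn H orbT. Qed.

Section Exchange.
Variables (n d : nat) (a : pt n) (N1 N : 'I_n).
Hypotheses (n_ge2 : 2 <= n) (N1_val : N1 = n.-2 :> nat) (N_val : N = n.-1 :> nat).
Hypotheses (a_inV : inV d a) (a_sorted : sorted_pt a)
  (a_ne0 : a <> tail2 n 0 d) (a_ne1 : a <> tail2 n 1 (d - 1)) (a_ne2 : a <> tail2 n 2 (d - 2)).

Lemma N1_lt_N : N1 < N.
Proof. by rewrite N1_val N_val; lia. Qed.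

Lemma ord_le_N (t : 'I_n) : t <= N.
Proof. by rewrite N_val; have := ltn_ord t; lia. Qed.

Lemma ord_lt_N1 (t : 'I_n) : t != N1 -> t != N -> t < N1.
Proof.
move=> H1 H2; have : (t : nat) != N1 := H1; have : (t : nat) != N := H2.
by rewrite N1_val N_val; have := ltn_ord t; lia.
Qed.

Lemma tail2_eq (b : pt n) : (forall t : 'I_n, t < N1 -> b t = 0) -> b = tail2 n (b N1) (b N).
Proof.
move=> Hlow; apply: pt_eq => t; rewrite ffunE.
case: eqP => [Ht | Ht]; first by congr (b _); apply: val_inj; rewrite /= Ht N_val.
case: eqP => [Ht' | Ht']; first by congr (b _); apply: val_inj; rewrite /= Ht' N1_val.
by apply: Hlow; apply: ord_lt_N1; apply/eqP => E; [apply: Ht'; rewrite E | apply: Ht; rewrite E].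
Qed.

Lemma ptsum_tail2 x y : ptsum (tail2 n x y) = x + y.
Proof.
have HNN1 : N != N1 := ord_gt_neq N1_lt_N.
rewrite /ptsum (bigD1 N1) //= (bigD1 N HNN1) /= big1 => [|t /andP [H1 H2]].
  have /negbTE Hne : n.-2 != n.-1 by apply/eqP; lia.
  by rewrite !ffunE /= N_val N1_val !eqxx Hne addn0.
rewrite ffunE /=; have := ord_lt_N1 H1 H2; rewrite N1_val => Ht.
by case: eqP => [|_]; [lia | case: eqP => //; lia].
Qed.

(* The three excluded shapes of [a] are those supported on the last two coordinates with
   [a N1 <= 2]. *)
Lemma a_tail_large : (forall t : 'I_n, t < N1 -> a t = 0) -> 2 < a N1.
Proof.
move=> Hlow; have Ha := tail2_eq Hlow.
have Hd : d = a N1 + a N by move: a_inV; rewrite /inV {1}Ha ptsum_tail2 => /eqP.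
rewrite ltnNge; apply/negP => Hsmall.
have : a N1 = 0 \/ a N1 = 1 \/ a N1 = 2 by lia.
by case=> [H|[H|H]]; [apply: a_ne0 | apply: a_ne1 | apply: a_ne2];
  rewrite {1}Ha H Hd; congr tail2; lia.
Qed.

(* [P] and [Q] play the first two links of a window, [R] its last link and [U] the sum of all
   links but the last. A candidate is a point y of V(n,d) with y <= U and y < P (first kind)
   or y <= Q + R and y < Q (second kind); [only_a] says that [a] is the only candidate. *)
Section Core.
Variables (P Q R U x : pt n).
Hypotheses (P_inV : inV d P) (Q_inV : inV d Q) (Q_ne_a : Q <> a)
  (PQ_le_U : forall t, P t + Q t <= U t).
Hypotheses (x_ne_a : x <> a) (x_inV : inV d x) (x_le_UR : forall t, x t <= U t + R t)
  (x_lt_P : ltlex x P).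
Hypothesis only_a : forall y, inV d y ->
  (forall t, y t <= U t) /\ ltlex y P \/ (forall t, y t <= Q t + R t) /\ ltlex y Q -> y = a.

Lemma exists_overflow : exists r, U r < x r.
Proof.
apply: NNPP => Hno; apply: x_ne_a; apply: only_a => //; left; split => // t.
by rewrite leqNgt; apply/negP => Ht; apply: Hno; exists t.
Qed.

Lemma Q_not_ltlex_P : ~ ltlex Q P.
Proof.
move=> HQP; apply: Q_ne_a; apply: only_a => //; left; split => // t.
by have := PQ_le_U t; lia.
Qed.

Section Pivots.
Variables (r r0 : 'I_n).
Hypotheses (x_gt_U : U r < x r) (x_eq_P : forall t : 'I_n, t < r0 -> x t = P t)
  (x_lt_P0 : x r0 < P r0).

Lemma r0_lt_r : r0 < r.
Proof.
rewrite ltnNge leq_eqVlt; apply/negP => /predU1P [/val_inj Er | Hlt].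
  by move: x_lt_P0; rewrite -Er; have := PQ_le_U r; lia.
by have := x_eq_P Hlt; have := PQ_le_U r; lia.
Qed.

Lemma P_r0_pos : 0 < P r0.
Proof. by have := x_lt_P0; lia. Qed.

Lemma R_pos : 0 < R r.
Proof. by have := x_le_UR r; lia. Qed.

Lemma exists_Q_pos : exists2 r1 : 'I_n, r1 <= r0 & 0 < Q r1.
Proof.
apply: NNPP => Hno.
have Q0 : forall t : 'I_n, t <= r0 -> Q t = 0.
  by move=> t Ht; apply: NNPP => HQt; apply: Hno; exists t => //; lia.
apply: Q_not_ltlex_P; apply: (ltlex_of_prefix (r := r0)) => [t Ht|]; rewrite Q0 //; lia.
Qed.

Section Support.
Variable r1 : 'I_n.
Hypotheses (r1_le_r0 : r1 <= r0) (Q_r1_pos : 0 < Q r1).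

Lemma r1_lt_r : r1 < r.
Proof. exact: leq_ltn_trans r1_le_r0 r0_lt_r. Qed.

(* A unit move of [Q] up to [r] is a candidate of the second kind. *)
Lemma move_Q_eq_a (c : 'I_n) : c < r -> 0 < Q c -> move_unit Q c r = a.
Proof.
move=> Hcr Hc; apply: only_a; first by rewrite /inV ptsum_move_unit.
right; split; last by apply: ltlex_move_unit.
apply: move_unit_le => [|t _|]; [exact: ord_lt_neq | lia | have := R_pos; lia].
Qed.

Lemma a_eq_move_Q : a = move_unit Q r1 r.
Proof. by rewrite move_Q_eq_a // r1_lt_r. Qed.

Lemma Q_below_r (c : 'I_n) : c < r -> c != r1 -> Q c = 0.
Proof.
move=> Hcr Hcr1; apply: NNPP => /eqP; rewrite -lt0n => HQc.
have := congr1 (fun f : pt n => f c) (etrans (move_Q_eq_a Hcr HQc) a_eq_move_Q).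
by rewrite move_unit_src ?(move_unit_other _ Hcr1 (ord_lt_neq Hcr)) ?ord_lt_neq //; lia.
Qed.

Lemma a_r1 : a r1 = Q r1 - 1.
Proof. by rewrite a_eq_move_Q move_unit_src // ord_lt_neq // r1_lt_r. Qed.

Lemma a_r : a r = Q r + 1.
Proof. by rewrite a_eq_move_Q move_unit_dst // ord_lt_neq // r1_lt_r. Qed.

Lemma a_eq_Q (t : 'I_n) : t != r1 -> t != r -> a t = Q t.
Proof. by move=> H1 H2; rewrite a_eq_move_Q move_unit_other. Qed.

Section LastOverflow.
Hypothesis r_N : r = N.

Let N1_lt_r : N1 < r. Proof. by rewrite r_N N1_lt_N. Qed.

Lemma last_r1_eq : r1 = N1.
Proof.
case: (eqVneq r1 N1) => // Hr1; exfalso.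
have r1_lt_N1 : r1 < N1 by apply: ord_lt_N1; rewrite // -r_N ord_lt_neq ?r1_lt_r.
have N1_ne_r1 : N1 != r1 := ord_gt_neq r1_lt_N1.
have aN1 : a N1 = 0 by rewrite a_eq_Q ?Q_below_r // ord_lt_neq.
have : 2 < a N1 by apply: a_tail_large => t Ht; have := a_sorted (ltnW Ht); lia.
by rewrite aN1.
Qed.

Lemma last_r0_eq : r0 = N1.
Proof.
apply: val_inj => /=; have := r0_lt_r; have := r1_le_r0.
by rewrite r_N last_r1_eq N_val N1_val; lia.
Qed.

Lemma last_a_low (t : 'I_n) : t < N1 -> a t = 0.
Proof.
move=> Ht; have Htr := ltn_trans Ht N1_lt_r.
have Htr1 : t != r1 by rewrite last_r1_eq ord_lt_neq.
by rewrite a_eq_Q ?Q_below_r // ord_lt_neq.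
Qed.

Lemma overflow_last_false : False.
Proof.
have a_big : 2 < a N1 := a_tail_large last_a_low.
have HN1N : N1 != N := ord_lt_neq N1_lt_N.
have Q_N : 1 < Q N by have := a_sorted (ltnW N1_lt_N); have := a_r; rewrite r_N; lia.
have P_N1 : 0 < P N1 by rewrite -last_r0_eq; lia.
have a_move_P : a = move_unit P N1 N.
  symmetry; apply: only_a; first by rewrite /inV ptsum_move_unit.
  left; split; last by apply: ltlex_move_unit => //; exact: N1_lt_N.
  by apply: move_unit_le => // [t _|]; [have := PQ_le_U t | have := PQ_le_U N]; lia.
have : move_unit a N1 N = a.
  apply: only_a; first by rewrite /inV ptsum_move_unit //; lia.
  left; split.
    apply: move_unit_le => // [t HtN|]; rewrite a_move_P.
      by rewrite ffunE (negbTE HtN) addn0; have := PQ_le_U t; lia.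
    by rewrite move_unit_dst //; have := PQ_le_U N; lia.
  apply: ltlex_move_unit; [exact: N1_lt_N | lia | move=> t Ht | ]; rewrite a_move_P.
    by rewrite move_unit_other // ord_lt_neq // (ltn_trans Ht N1_lt_N).
  by rewrite move_unit_src //; lia.
by move/(congr1 (fun f : pt n => f N1)); rewrite move_unit_src //; lia.
Qed.

End LastOverflow.

Section InnerOverflow.
Hypothesis r_ne_N : r != N.

Let r_lt_N : r < N. Proof. by rewrite ltn_neqAle ord_le_N andbT; exact: r_ne_N. Qed.

Lemma inner_a_move_P : a = move_unit P r0 N.
Proof.
have r0_lt_N := ltn_trans r0_lt_r r_lt_N.
have Q_N_pos : 0 < Q N.
  have := a_sorted (ltnW r_lt_N); rewrite a_r a_eq_Q ?ord_gt_neq //; first lia.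
  exact: ltn_trans r1_lt_r r_lt_N.
symmetry; apply: only_a; first by rewrite /inV ptsum_move_unit // P_r0_pos.
left; split; last by apply: ltlex_move_unit => //; exact: P_r0_pos.
apply: move_unit_le => [|t _|]; [exact: ord_lt_neq | have := PQ_le_U t; lia | ].
by have := PQ_le_U N; lia.
Qed.

Lemma inner_P_eq_a (t : 'I_n) : t != r0 -> t != N -> P t = a t.
Proof. by move=> H1 H2; rewrite inner_a_move_P move_unit_other. Qed.

Lemma inner_P_r0 : P r0 = a r0 + 1.
Proof.
rewrite inner_a_move_P move_unit_src ?ord_lt_neq ?(ltn_trans r0_lt_r r_lt_N) //.
by have := P_r0_pos; lia.
Qed.

Lemma inner_r1_lt_r0 : r1 < r0.
Proof.
rewrite ltn_neqAle r1_le_r0 andbT; apply/eqP => /val_inj Er1.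
have r_ne_r0 : r != r0 := ord_gt_neq r0_lt_r.
apply: Q_not_ltlex_P; apply: (ltlex_of_prefix (r := r)) => [t|]; last first.
  by rewrite inner_P_eq_a // a_r; lia.
rewrite leq_eqVlt => /predU1P [/val_inj -> | Htr]; first by rewrite inner_P_eq_a // a_r; lia.
case: (eqVneq t r0) => [-> | Htr0]; first by rewrite inner_P_r0 -Er1 a_r1; lia.
have HtN : t != N := ord_lt_neq (ltn_trans Htr r_lt_N).
have Htr1 : t != r1 by rewrite Er1.
by rewrite inner_P_eq_a // a_eq_Q // ord_lt_neq.
Qed.

Lemma inner_a_r0 : a r0 = 0.
Proof.
have r0_ne_r1 : r0 != r1 := ord_gt_neq inner_r1_lt_r0.
by rewrite a_eq_Q ?Q_below_r ?r0_lt_r // ord_lt_neq ?r0_lt_r.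
Qed.

Lemma inner_a_low (t : 'I_n) : t < r -> a t = 0.
Proof.
move=> Htr; case: (leqP t r0) => Htr0; first by have := a_sorted Htr0; rewrite inner_a_r0; lia.
have Htr1 : t != r1 := ord_gt_neq (ltn_trans inner_r1_lt_r0 Htr0).
by rewrite a_eq_Q ?Q_below_r // ord_lt_neq.
Qed.

Lemma inner_a_le_U (t : 'I_n) : a t <= U t.
Proof.
case: (eqVneq t r) => [-> | Htr].
  have r_ne_r0 : r != r0 := ord_gt_neq r0_lt_r.
  by rewrite -inner_P_eq_a //; have := PQ_le_U r; lia.
have : a t <= Q t by case: (eqVneq t r1) => [-> | Htr1]; rewrite ?a_r1 ?a_eq_Q //; lia.
by have := PQ_le_U t; lia.
Qed.

(* Otherwise moving a unit of [a] from [r] to [s] gives a candidate of the first kind. *)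
Lemma inner_no_room (s : 'I_n) : r < s -> U s <= a s.
Proof.
move=> Hrs; rewrite leqNgt; apply/negP => Hs.
have Hr_ne_s : r != s := ord_lt_neq Hrs.
have : move_unit a r s = a.
  apply: only_a; first by rewrite /inV ptsum_move_unit // a_r addn1.
  left; split; first by apply: move_unit_le => // t _; exact: inner_a_le_U.
  apply: (ltlex_of_prefix (r := r0)) => [t Ht|]; last first.
    by rewrite move_unit_other ?inner_a_r0 ?P_r0_pos ?ord_lt_neq ?(ltn_trans r0_lt_r Hrs) ?r0_lt_r.
  have Htr := leq_ltn_trans Ht r0_lt_r.
  by rewrite move_unit_other ?inner_a_low ?ord_lt_neq ?(ltn_trans Htr Hrs).
by move/(congr1 (fun f : pt n => f r)); rewrite move_unit_src // a_r; lia.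
Qed.

Lemma overflow_inner_false : False.
Proof.
have HN1N := N1_lt_N; case: (ltnP r N1) => Hr.
- have P_N1 := inner_P_eq_a (ord_gt_neq (ltn_trans r0_lt_r Hr)) (ord_lt_neq HN1N).
  have Q_N1 := a_eq_Q (ord_gt_neq (ltn_trans r1_lt_r Hr)) (ord_gt_neq Hr).
  have := inner_no_room Hr; have := PQ_le_U N1; have := a_sorted (ltnW Hr).
  by rewrite P_N1 -Q_N1 a_r; lia.
- have r_N1 : r = N1 by apply: val_inj => /=; move: Hr r_lt_N; rewrite N1_val N_val; lia.
  have P_N : a N = P N + 1.
    by rewrite inner_a_move_P move_unit_dst // ord_lt_neq // (ltn_trans r0_lt_r r_lt_N).
  have Q_N := a_eq_Q (ord_gt_neq (ltn_trans r1_lt_r r_lt_N)) (ord_gt_neq r_lt_N).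
  have : 2 < a N1 by apply: a_tail_large => t Ht; apply: inner_a_low; rewrite r_N1.
  have := inner_no_room r_lt_N; have := PQ_le_U N; have := a_sorted (ltnW HN1N).
  by rewrite -Q_N; lia.
Qed.

End InnerOverflow.

End Support.
End Pivots.

Lemma exchange_core_false : False.
Proof.
have [r x_gt_U] := exists_overflow.
case/existsP: x_lt_P => r0 /andP [/forallP x_pre x_lt_P0].
have x_eq_P (t : 'I_n) : t < r0 -> x t = P t by move=> Ht; apply/eqP; have := x_pre t; rewrite Ht.
have [r1 r1_le_r0 Q_r1_pos] := exists_Q_pos x_gt_U x_lt_P0.
case: (eqVneq r N) => [r_N | r_ne_N].
  exact: (overflow_last_false x_gt_U x_eq_P x_lt_P0 r1_le_r0 Q_r1_pos r_N).
exact: (overflow_inner_false x_gt_U x_eq_P x_lt_P0 r1_le_r0 Q_r1_pos r_ne_N).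
Qed.

End Core.
End Exchange.

Lemma exchange_link n d (a P Q R U x : pt n) :
  2 <= n -> inV d a -> sorted_pt a ->
  a <> tail2 n 0 d -> a <> tail2 n 1 (d - 1) -> a <> tail2 n 2 (d - 2) ->
  inV d P -> inV d Q -> Q <> a -> (forall t, P t + Q t <= U t) ->
  inV d x -> x <> a -> (forall t, x t <= U t + R t) -> ltlex x P ->
  exists2 y, inGamma d a y &
    (forall t, y t <= U t) /\ ltlex y P \/ (forall t, y t <= Q t + R t) /\ ltlex y Q.
Proof.
move=> n_ge2 a_inV a_sorted a_ne0 a_ne1 a_ne2 P_inV Q_inV Q_ne_a PQ_le_U x_inV x_ne_a x_le x_lt.
have N_lt : n.-1 < n by lia.
have N1_lt : n.-2 < n by lia.
apply: NNPP => Hno.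
apply: (@exchange_core_false n d a (Ordinal N1_lt) (Ordinal N_lt) n_ge2 erefl erefl a_inV
  a_sorted a_ne0 a_ne1 a_ne2 P Q R U x P_inV Q_inV Q_ne_a PQ_le_U x_ne_a x_inV x_le x_lt).
move=> y y_inV Hy; apply: NNPP => y_ne_a; apply: Hno; exists y => //.
by rewrite /inGamma y_inV; exact/eqP.
Qed.

(** * Decomposition into elements of Gamma *)

Lemma exists_ptsum_below n (c : pt n) k :
  k <= ptsum c -> exists2 u : pt n, forall t, u t <= c t & ptsum u = k.
Proof.
elim: k => [|k IH] Hk; first by exists (zpt n) => [t|]; rewrite ?zptE ?ptsum_zpt.
have [u Hu Hsum] := IH (ltnW Hk).
have [t Ht] : exists t, u t < c t.
  apply: NNPP => Hno; suff : ptsum c <= ptsum u by lia.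
  by apply: leq_sum => t _; rewrite leqNgt; apply/negP => Ht; apply: Hno; exists t.
exists (addpt u (unitpt t)); last by rewrite ptsum_add ptsum_unitpt Hsum addn1.
by move=> t'; rewrite addptE ffunE; case: (eqVneq t' t) => [-> | _] /=; have := Hu t'; lia.
Qed.

Section Decomposition.
Variables (n d : nat) (a : pt n).
Hypothesis GG : GammaGamma d a.

(* Peel off any [u <= c] of weight [d]; if [u = a], merge it with the next summand and split
   the sum again using [GG]. *)
Lemma gamma_decomposition k (c : pt n) : 2 <= k -> ptsum c = k * d ->
  exists D, [/\ size D = k, all (inGamma d a) D & sumpts D = c].
Proof.
elim: k c => [|k IH] // c Hk Hc; case: (leqP k 1) => Hk1.
  have Ek : k = 1 by lia.
  have : inV (2 * d) c by rewrite /inV Hc Ek.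
  move/GG => [b1 [b2 [Hb1 [Hb2 ->]]]]; exists [:: b1; b2]; split; rewrite /= ?Ek //.
    by rewrite Hb1 Hb2.
  by apply: pt_eq => t; rewrite !addptE zptE addn0.
have [u Hu Hsu] : exists2 u : pt n, forall t, u t <= c t & ptsum u = d.
  by apply: exists_ptsum_below; rewrite Hc; lia.
have Hsub : ptsum (subpt c u) = k * d by rewrite ptsum_sub // Hc Hsu mulSn addKn.
have [[|g D] [/= HD HgD HsD]] := IH (subpt c u) Hk1 Hsub.
  by move: HD; lia.
move: HgD => /andP [Hg HD'].
have Hc_eq t : c t = u t + g t + sumpts D t.
  by have := congr1 (fun f : pt n => f t) HsD; rewrite /= addptE subptE; have := Hu t; lia.
case: (eqVneq u a) => [Hua | Hua].
  have : inV (2 * d) (addpt u g).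
    by move: Hg => /andP [/eqP Hg _]; rewrite /inV ptsum_add Hg Hsu; lia.
  move/GG => [h1 [h2 [Hh1 [Hh2 Hug]]]]; exists [:: h1, h2 & D].
  split; [by rewrite /=; lia | by rewrite /= Hh1 Hh2 | ].
  apply: pt_eq => t; rewrite !sumpts_cons Hc_eq.
  by have := congr1 (fun f : pt n => f t) Hug; rewrite !addptE; lia.
exists [:: u, g & D]; split; first by rewrite /=; lia.
  by rewrite /= Hg HD' /inGamma /inV Hsu eqxx Hua.
by apply: pt_eq => t; rewrite !sumpts_cons Hc_eq addnA.
Qed.

End Decomposition.

Section Nodes.
Variable n : nat.
Implicit Types (s p q pre post A B : seq (pt n)).

Lemma node0 s : node s 0 = zpt n.
Proof. by rewrite /node take0. Qed.

Lemma node_oversize s x : size s <= x -> node s x = sumpts s.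
Proof. by move=> Hx; rewrite /node take_oversize. Qed.

Lemma node_cat s1 s2 x t : node (s1 ++ s2) x t = node s1 x t + node s2 (x - size s1) t.
Proof.
rewrite /node take_cat; case: ltnP => Hx; last by rewrite sumpts_cat (take_oversize Hx).
have -> : x - size s1 = 0 by lia.
by rewrite take0 zptE addn0.
Qed.

Lemma node_succ s j t : j < size s -> node s j.+1 t = node s j t + nth (zpt n) s j t.
Proof.
move=> Hj; rewrite /node (take_nth (zpt n) Hj) -cats1 sumpts_cat.
by rewrite sumpts_cons zptE addn0.
Qed.

Lemma ptsum_node d s j : all (inV d) s -> j <= size s -> ptsum (node s j) = j * d.
Proof.
move=> Hs Hj; rewrite /node (@ptsum_sumpts _ d) ?size_takel //.
by move: Hs; rewrite -{1}(cat_take_drop j s) all_cat => /andP [].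
Qed.

(* Nodes of a chain are told apart by their weight, so a shared node sits at the same
   position. *)
Lemma in_open_node d p q x : 0 < d -> all (inV d) p -> all (inV d) q ->
  x <= size p -> in_open q (node p x) -> node q x = node p x.
Proof.
move=> d_gt0 Hp Hq Hx /hasP [j]; rewrite mem_iota => /andP [_ Hj] /eqP Hqj.
have Hjq : j <= size q by lia.
have := ptsum_node Hq Hjq; rewrite Hqj (ptsum_node Hp Hx) => /eqP.
by rewrite eqn_pmul2r // => /eqP Exj; rewrite -Hqj Exj.
Qed.

Lemma node_in_open q x : 0 < x < size q -> in_open q (node q x).
Proof. by move=> Hx; apply/hasP; exists x => //; rewrite mem_iota; lia. Qed.

Lemma nth_eq_of_node s1 s2 j : j < size s1 -> j < size s2 ->
  node s1 j = node s2 j -> node s1 j.+1 = node s2 j.+1 -> nth (zpt n) s1 j = nth (zpt n) s2 j.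
Proof.
move=> Hj1 Hj2 Hnj HnSj; apply: pt_eq => t; apply/(@addnI (node s1 j t)).
by rewrite -node_succ // Hnj -node_succ // HnSj.
Qed.

Lemma take_eq_of_node p q k : k <= size p -> k <= size q ->
  (forall x, x <= k -> node q x = node p x) -> take k q = take k p.
Proof.
move=> Hp Hq Hnode; apply: (@eq_from_nth _ (zpt n)); rewrite !size_takel //.
by move=> j Hj; rewrite !nth_take //; apply: nth_eq_of_node; rewrite ?Hnode //; lia.
Qed.

Lemma drop_eq_of_node p q k : size q = size p ->
  (forall x, k <= x <= size p -> node q x = node p x) -> drop k q = drop k p.
Proof.
move=> Hsize Hnode; apply: (@eq_from_nth _ (zpt n)); rewrite !size_drop Hsize //.
by move=> j Hj; rewrite !nth_drop; apply: nth_eq_of_node; rewrite ?Hnode ?Hsize //; lia.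
Qed.

Lemma splice_of_nodes p q (k w : nat) : size q = size p -> k + w <= size p ->
  (forall x, x <= k \/ k + w <= x <= size p -> node q x = node p x) ->
  q = take k p ++ take w (drop k q) ++ drop (k + w) p.
Proof.
move=> Hsize Hsw Hnode.
rewrite -(@take_eq_of_node p q k) ?Hsize; [| lia | lia | by move=> x Hx; apply: Hnode; left].
rewrite -(@drop_eq_of_node p q (k + w)) // => [|x Hx]; last by apply: Hnode; right.
by rewrite addnC -drop_drop !cat_take_drop.
Qed.

Lemma node_rcons_eq s1 s2 (z : pt n) : size s1 = size s2 ->
  sumpts (s1 ++ [:: z]) = sumpts (s2 ++ [:: z]) ->
  node (s1 ++ [:: z]) (size s1) = node (s2 ++ [:: z]) (size s1).
Proof.
move=> Hsize Hsum; rewrite /node !take_size_cat //; apply: pt_eq => t.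
by have := congr1 (fun f : pt n => f t) Hsum; rewrite !sumpts_cat => /addIn.
Qed.

End Nodes.

(** * Rerouting windows *)

(* [C] can replace the window [A] of a chain without moving the nodes outside it. *)
Definition lower_window n d (a : pt n) (C A : seq (pt n)) : Prop :=
  [/\ size C = size A, all (inV d) C, sumpts C = sumpts A & facet_lt a C A].

(* Rerouting a window through an interior node makes a facet witness cover one more node. *)
Definition reroutable n d (a : pt n) (A : seq (pt n)) : Prop :=
  exists2 C, lower_window d a C A & exists2 j, 0 < j < size A & node C j = node A j.

Section Splice.
Variables (n : nat) (pre post A B : seq (pt n)).
Hypothesis size_BA : size B = size A.

Lemma facet_lt_splice (a : pt n) :
  facet_lt a (pre ++ B ++ post) (pre ++ A ++ post) <-> facet_lt a B A.
Proof.
rewrite /facet_lt !adeg_cat ltn_add2l ltn_add2r.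
split=> -[Hlt | [Hdeg Hlex]]; [by left | right | by left | right].
- split; first by move: Hdeg => /addnI/addIn.
  case: Hlex => i [Hi [Htake Hnth]].
  move: Hnth; rewrite !nth_cat; case: ltnP => Hpre; first by rewrite (negbTE (ltlex_irr _)).
  move/eqP: Htake; rewrite !(take_cat i pre) ltnNge Hpre /= eqseq_cat // eqxx /= => /eqP.
  set j := i - size pre; rewrite size_BA !(take_cat j) size_BA; case: ltnP => HA.
    by move=> Htake Hnth; exists j.
  move/eqP; rewrite eqseq_cat ?size_BA // => /andP [/eqP -> _].
  by rewrite (negbTE (ltlex_irr _)).
- split; first by rewrite Hdeg.
  case: Hlex => i [Hi [Htake Hnth]]; exists (size pre + i); split; first by rewrite !size_cat; lia.
  rewrite !(take_cat _ pre) !(nth_cat _ pre) ltnNge leq_addr /= addKn.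
  by rewrite !(take_cat i) !nth_cat size_BA Hi Htake.
Qed.

Lemma node_splice x : node B (x - size pre) = node A (x - size pre) ->
  node (pre ++ B ++ post) x = node (pre ++ A ++ post) x.
Proof. by move=> HBA; apply: pt_eq => t; rewrite !node_cat size_BA HBA. Qed.

Lemma node_splice_out x : sumpts B = sumpts A -> x <= size pre \/ size pre + size A <= x ->
  node (pre ++ B ++ post) x = node (pre ++ A ++ post) x.
Proof.
move=> Hsum Hx; apply: node_splice.
case: Hx => Hx; last by rewrite !node_oversize ?size_BA //; lia.
have -> : x - size pre = 0 by lia.
by rewrite !node0.
Qed.

Lemma is_chain_splice d lam : is_chain d lam (pre ++ A ++ post) ->
  all (inV d) B -> sumpts B = sumpts A -> is_chain d lam (pre ++ B ++ post).
Proof.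
move=> [Hall Hsum] HB HBA; split; first by move: Hall; rewrite !all_cat HB => /and3P [-> _ ->].
by rewrite -Hsum; apply: pt_eq => t; rewrite !sumpts_cat HBA.
Qed.

Lemma lower_window_of_splice d (a lam : pt n) p q :
  p = pre ++ A ++ post -> q = pre ++ B ++ post ->
  is_chain d lam p -> is_chain d lam q -> facet_lt a q p -> lower_window d a B A.
Proof.
move=> -> -> [Hp Hsp] [Hq Hsq] /facet_lt_splice Hlt; split => //.
  by move: Hq; rewrite !all_cat => /and3P [].
apply: pt_eq => t; have := congr1 (fun f : pt n => f t) (etrans Hsq (esym Hsp)).
by rewrite !sumpts_cat => /addnI /addIn.
Qed.

End Splice.

Section Window.
Variables (n d : nat) (a : pt n).
Hypotheses (n_ge2 : 2 <= n) (a_inV : inV d a) (a_sorted : sorted_pt a)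
  (a_ne0 : a <> tail2 n 0 d) (a_ne1 : a <> tail2 n 1 (d - 1)) (a_ne2 : a <> tail2 n 2 (d - 2)).
Hypothesis GG : GammaGamma d a.

Lemma fill_window (pre suf : seq (pt n)) (S : pt n) k : 2 <= k ->
  all (inV d) pre -> all (inV d) suf -> (forall t, sumpts pre t + sumpts suf t <= S t) ->
  ptsum S = (size pre + k + size suf) * d ->
  exists D, [/\ size D = k, all (inGamma d a) D & sumpts (pre ++ D ++ suf) = S].
Proof.
move=> Hk Hpre Hsuf Hle HS.
have Hc : ptsum (subpt S (addpt (sumpts pre) (sumpts suf))) = k * d.
  rewrite ptsum_sub => [|t]; last by rewrite addptE.
  by rewrite HS ptsum_add !(ptsum_sumpts (d := d)) // !mulnDl; lia.
have [D [HD1 HD2 HD3]] := gamma_decomposition GG Hk Hc.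
exists D; split => //; apply: pt_eq => t.
by rewrite !sumpts_cat HD3 subptE addptE; have := Hle t; lia.
Qed.

Section Shape.
Variables (A0 A1 Al : pt n) (mid : seq (pt n)).
Local Notation Ainit := [:: A0, A1 & mid].
Local Notation A := (Ainit ++ [:: Al]).
Hypotheses (mid_ne : 0 < size mid) (A_inV : all (inV d) A).

Let ptsum_A : ptsum (sumpts A) = (size mid + 3) * d.
Proof. by rewrite (ptsum_sumpts A_inV) size_cat /=; congr (_ * _); lia. Qed.

Let sumpts_A t : sumpts A t = sumpts Ainit t + Al t.
Proof. by rewrite sumpts_cat sumpts1. Qed.

Let Al_inV : all (inV d) [:: Al].
Proof. by move: A_inV; rewrite all_cat => /andP []. Qed.

Lemma reroutable_head_a : A0 = a -> reroutable d a A.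
Proof.
move=> HA0.
have [D [HD1 HD2 HD3]] : exists D, [/\ size D = size mid + 2, all (inGamma d a) D &
    sumpts ([::] ++ D ++ [:: Al]) = sumpts A].
  apply: fill_window => // [|t|]; first lia.
    by rewrite sumpts_A sumpts0 sumpts1; lia.
  by rewrite ptsum_A /=; congr (_ * _); lia.
exists (D ++ [:: Al]).
  split; [by rewrite !size_cat HD1 /=; lia | by rewrite all_cat (gamma_inV HD2) | exact: HD3 | ].
  left; rewrite !adeg_cat (adeg_gamma HD2) /adeg /= HA0 eqxx; lia.
exists (size D); first by rewrite HD1 size_cat /=; lia.
by apply: (@node_rcons_eq _ D Ainit) => //; rewrite HD1 addn2.
Qed.

Lemma reroutable_head_ne_a : A0 != a -> 0 < adeg a A -> reroutable d a A.
Proof.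
move=> HA0 Hdeg; have HA0_inV : inV d A0 by move: A_inV => /andP [].
have [D [HD1 HD2 HD3]] : exists D, [/\ size D = size mid + 2, all (inGamma d a) D &
    sumpts ([:: A0] ++ D ++ [::]) = sumpts A].
  apply: fill_window; [lia | by rewrite /= HA0_inV | by [] | move=> t | ].
    by rewrite sumpts_A sumpts0 sumpts1 sumpts_cons; lia.
  by rewrite ptsum_A /=; congr (_ * _); lia.
have C_gamma : all (inGamma d a) (A0 :: D) by rewrite /= HD2 /inGamma HA0_inV HA0.
exists (A0 :: D).
  split; [by rewrite /= HD1 size_cat /=; lia | exact: gamma_inV C_gamma | | ].
    by rewrite -HD3 cats0.
  by left; rewrite (adeg_gamma C_gamma).
by exists 1; rewrite // /node !take_cons !take0.
Qed.

Section BelowA0.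
Hypothesis A_gamma : all (inGamma d a) A.

Let Al_gamma : inGamma d a Al.
Proof. by move: A_gamma; rewrite all_cat => /andP [_ /andP []]. Qed.

Lemma reroutable_below_head y : inGamma d a y -> (forall t, y t <= sumpts Ainit t) ->
  ltlex y A0 -> reroutable d a A.
Proof.
move=> Hy Hle Hlt.
have [D [HD1 HD2 HD3]] : exists D, [/\ size D = size mid + 1, all (inGamma d a) D &
    sumpts ([:: y] ++ D ++ [:: Al]) = sumpts A].
  apply: fill_window; [lia | | | move=> t | ].
  - by rewrite /= andbT; move: Hy => /andP [].
  - by rewrite /= andbT; move: Al_gamma => /andP [].
  - by rewrite sumpts_A !sumpts1; have := Hle t; lia.
  by rewrite ptsum_A /=; congr (_ * _); lia.
have C_gamma : all (inGamma d a) (y :: D ++ [:: Al]) by rewrite /= Hy all_cat HD2 /= Al_gamma.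
exists (y :: D ++ [:: Al]).
  split; [by rewrite /= size_cat HD1 size_cat /=; lia | exact: gamma_inV C_gamma | exact: HD3 | ].
  right; split; first by rewrite (adeg_gamma C_gamma) (adeg_gamma A_gamma).
  by exists 0.
exists (size D).+1; first by rewrite HD1 size_cat /=; lia.
by apply: (@node_rcons_eq _ (y :: D) Ainit) => //=; rewrite HD1 addn1.
Qed.

Lemma reroutable_below_second y : inGamma d a y -> (forall t, y t <= A1 t + Al t) ->
  ltlex y A1 -> reroutable d a A.
Proof.
move=> Hy Hle Hlt.
have [D [HD1 HD2 HD3]] : exists D, [/\ size D = size mid + 1, all (inGamma d a) D &
    sumpts ([:: A0; y] ++ D ++ [::]) = sumpts A].
  apply: fill_window; [lia | | by [] | move=> t | ].
  - by rewrite /= andbT; move: Hy A_gamma => /andP [-> _] /andP [/andP [-> _]].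
  - by rewrite sumpts_A sumpts0 !sumpts_cons sumpts0; have := Hle t; lia.
  by rewrite ptsum_A /=; congr (_ * _); lia.
have C_gamma : all (inGamma d a) [:: A0, y & D].
  by rewrite /= Hy HD2; move: A_gamma => /andP [->].
exists [:: A0, y & D].
  split; [by rewrite /= HD1 size_cat /=; lia | exact: gamma_inV C_gamma | | ].
    by rewrite -HD3 cats0.
  right; split; first by rewrite (adeg_gamma C_gamma) (adeg_gamma A_gamma).
  by exists 1.
by exists 1; rewrite // /node !take_cons !take0.
Qed.

End BelowA0.

Lemma reroutable_below_lex x : adeg a A = 0 -> inGamma d a x ->
  (forall t, x t <= sumpts A t) -> ltlex x A0 -> reroutable d a A.
Proof.
move=> Hdeg /andP [x_inV /eqP x_ne_a] Hle Hlt.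
have A_gamma : all (inGamma d a) A.
  by apply/allP => z Hz; rewrite /inGamma (allP A_inV z Hz) (adeg0_neq Hdeg Hz).
have /and3P [/andP [HA0 _] /andP [HA1 /eqP HA1_ne_a] _] := A_gamma.
have HU t : A0 t + A1 t <= sumpts Ainit t by rewrite !sumpts_cons; lia.
have HxUR t : x t <= sumpts Ainit t + Al t by rewrite -sumpts_A.
have [y Hy [[HyU HyP] | [HyQR HyQ]]] := exchange_link n_ge2 a_inV a_sorted a_ne0 a_ne1 a_ne2
  HA0 HA1 HA1_ne_a HU x_inV x_ne_a HxUR Hlt.
  exact: reroutable_below_head HyU HyP.
exact: reroutable_below_second HyQR HyQ.
Qed.

End Shape.

Lemma reroutable_of_lower (A B : seq (pt n)) :
  4 <= size A -> all (inV d) A -> lower_window d a B A -> reroutable d a A.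
Proof.
case/lastP: A => [|Ainit Al] //; case: Ainit => [|A0 [|A1 mid]] //.
rewrite -cats1 size_cat /= => Hsize HA HBA; have mid_ne : 0 < size mid by lia.
have [HsB HB HsumB HltB] := HBA.
case: (posnP (adeg a ([:: A0, A1 & mid] ++ [:: Al]))) => Hdeg; last first.
  by case: (eqVneq A0 a) => HA0; [apply: reroutable_head_a | apply: reroutable_head_ne_a].
case: HltB => [| [HdegB [[|i] [Hi [Htake Hlex]]]]]; first by rewrite Hdeg.
  have B0_in : nth (zpt n) B 0 \in B by rewrite mem_nth // HsB.
  apply: (reroutable_below_lex mid_ne HA (x := nth (zpt n) B 0)) => // [|t].
    by rewrite /inGamma (allP HB) // (adeg0_neq _ B0_in) // HdegB.
  by rewrite -HsumB mem_sumpts_le.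
exists B => //; exists 1 => //.
by rewrite /node -(@take_takel _ 1 i.+1) // Htake take_takel.
Qed.

End Window.

(** * Facets of F_{<p} ∩ p *)

Section Chains.
Variables (n d : nat) (lam : pt n).
Hypothesis d_gt0 : 0 < d.

Lemma size_chain s : is_chain d lam s -> size s = ptsum lam %/ d.
Proof. by move=> [Hall <-]; rewrite (ptsum_sumpts Hall) mulnK. Qed.

Lemma chain_node_eq p q x : is_chain d lam p -> is_chain d lam q -> x <= size p ->
  (0 < x < size p -> in_open q (node p x)) -> node q x = node p x.
Proof.
move=> Hp Hq Hx Hopen; have size_qp : size q = size p by rewrite !size_chain.
case: (posnP x) => [-> | x_gt0]; first by rewrite !node0.
case: (ltnP x (size p)) => Hxp.
  by apply: (in_open_node d_gt0 Hp.1 Hq.1 Hx); apply: Hopen; rewrite x_gt0.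
by rewrite !node_oversize ?size_qp // Hp.2 Hq.2.
Qed.

Lemma facet_Fp_maximal (a : pt n) p q (T : pred nat) j :
  facet_Fp d a lam p T -> is_chain d lam q -> facet_lt a q p ->
  (forall x, T x -> in_open q (node p x)) -> 0 < j < size p -> in_open q (node p j) -> T j.
Proof.
move=> [[HT _] Hmax] Hq Hqp HTq Hj Hqj.
have Hface : face_Fp d a lam p [pred x | T x || (x == j)].
  split; first by move=> x /orP [/HT | /eqP ->].
  by exists q; split => //; split => // x /orP [/HTq | /eqP ->].
by move: (Hmax _ Hface (fun x Hx => introT orP (or_introl Hx)) j); rewrite /= eqxx orbT; apply.
Qed.

End Chains.

Section FacetWindow.
Variables (n d : nat) (a lam : pt n) (p : seq (pt n)) (i m : nat).
Hypotheses (i_ge1 : 1 <= i) (Him : i + m <= size p).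

Local Notation pre := (take i.-1 p).
Local Notation A := (take m.+1 (drop i.-1 p)).
Local Notation post := (drop (i + m) p).

Let window_end : i.-1 + m.+1 = i + m. Proof. lia. Qed.

Lemma size_window : size A = m.+1.
Proof. by rewrite size_takel // size_drop; lia. Qed.

Lemma window_split : p = pre ++ A ++ post.
Proof. by rewrite -window_end addnC -drop_drop !cat_take_drop. Qed.

Hypothesis p_chain : is_chain d lam p.

Lemma window_inV : all (inV d) A.
Proof. by move: p_chain.1; rewrite {1}window_split !all_cat => /and3P []. Qed.

Hypotheses (d_gt0 : 0 < d)
  (facet_p : facet_Fp d a lam p [pred x | (0 < x < size p) && ~~ (i <= x < i + m)]).

Lemma facet_window_lower : exists B, lower_window d a B A.
Proof.
have [[_ [q [q_chain [q_lt_p q_cover]]]] _] := facet_p.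
have size_qp : size q = size p by rewrite (size_chain d_gt0 p_chain) (size_chain d_gt0 q_chain).
have size_B : size (take m.+1 (drop i.-1 q)) = size A.
  by rewrite size_window size_takel // size_drop size_qp; lia.
exists (take m.+1 (drop i.-1 q)).
apply: (lower_window_of_splice size_B window_split _ p_chain q_chain q_lt_p).
rewrite -window_end; apply: splice_of_nodes; [by [] | lia | move=> x Hx].
apply: (chain_node_eq d_gt0 p_chain q_chain) => [|Hx']; first lia.
by apply: q_cover; rewrite /= Hx'; lia.
Qed.

Lemma facet_window_rigid : ~ reroutable d a A.
Proof.
move=> [C [size_C C_inV sum_C C_lt_A] [j Hj HCj]]; rewrite size_window in Hj.
have size_pre : size pre = i.-1 by rewrite size_takel //; lia.
have C_chain : is_chain d lam (pre ++ C ++ post).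
  by apply: (is_chain_splice (A := A)); rewrite // -window_split.
have size_C' : size (pre ++ C ++ post) = size p by rewrite {3}window_split !size_cat size_C.
have C_lt_p : facet_lt a (pre ++ C ++ post) p by rewrite {3}window_split; apply/facet_lt_splice.
have C_node x : x <= i.-1 \/ i + m <= x -> node (pre ++ C ++ post) x = node p x.
  move=> Hx; rewrite {3}window_split (node_splice_out _ size_C) //.
  by rewrite size_pre size_window window_end.
have : [pred x | (0 < x < size p) && ~~ (i <= x < i + m)] (i.-1 + j).
  apply: (facet_Fp_maximal facet_p C_chain C_lt_p) => [x /andP [Hx1 Hx2]||]; last first.
  - rewrite -[in node p _]size_pre {3}window_split -(node_splice _ size_C) ?addKn // size_pre.
    by apply: node_in_open; rewrite size_C'; lia.
  - lia.
  by rewrite -C_node; [apply: node_in_open; rewrite size_C' | lia].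
by rewrite /= => /andP [_ /negP]; apply; lia.
Qed.

End FacetWindow.

Unset Implicit Arguments.

Theorem lemma3p5 (n d : nat) (a lam : pt n) (p : seq (pt n)) (i m : nat) :
  2 <= n -> 2 <= d ->
  inV d a -> sorted_pt a ->
  a <> tail2 n 0 d -> a <> tail2 n 1 (d - 1) -> a <> tail2 n 2 (d - 2) ->
  GammaGamma d a ->
  in_semigroup d a lam ->
  is_chain d lam p ->
  1 <= adeg a p ->
  1 <= i -> i + m <= ptsum lam %/ d ->
  facet_Fp d a lam p
    [pred x | (0 < x < ptsum lam %/ d) && ~~ (i <= x < i + m)] ->
  m <= 2.
Proof.
move=> n_ge2 d_ge2 a_inV a_sorted a_ne0 a_ne1 a_ne2 GG _ p_chain _ i_ge1 Him Hfacet.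
have d_gt0 : 0 < d by apply: ltnW.
rewrite -(size_chain d_gt0 p_chain) in Him Hfacet; rewrite leqNgt; apply/negP => m_gt2.
have [B B_lower] := facet_window_lower i_ge1 Him p_chain d_gt0 Hfacet.
apply: (facet_window_rigid i_ge1 Him p_chain d_gt0 Hfacet).
apply: (reroutable_of_lower n_ge2 a_inV a_sorted a_ne0 a_ne1 a_ne2 GG _ _ B_lower).
  by rewrite (size_window i_ge1 Him).
exact: window_inV i_ge1 Him p_chain.
Qed.
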